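(* Let $(X,\mathsf{d}_X)$ be a compact metric space and $\mathfrak{A}=\bigoplus_{k=0}^n M_{m_k}(\mathbb{C})$ with $n\in\mathbb{N}$, $m_k\ge1$. Let $\mu$ be a state of $\mathfrak{A}$, and define $\Delta^{\mathfrak{A}}_\mu:X\to\mathscr{S}(C(X,\mathfrak{A}))$ by $\Delta^{\mathfrak{A}}_\mu(x)=\mu_x$, where $\mu_x(a)=\mu(a(x))$. Then $\Delta^{\mathfrak{A}}_\mu$ is a homeomorphism onto its image for the weak* topology. Furthermore, if $\|\cdot\|_{\mathsf{n}}$ is a norm on $\mathfrak{A}$ (over $\mathbb{R}$ or $\mathbb{C}$) and $M,N>0$ with $M\|\cdot\|_{\mathsf{n}}\le\|\cdot\|_{\mathfrak{A}}\le N\|\cdot\|_{\mathsf{n}}$, then for every $q\in\{C(X),\mathbb{C}\}\cup\mathscr{S}(C(X,\mathfrak{A}))$ and all $x,y\in X$, $$\mathrm{mk}_{\mathsf{L}^{(\mathsf{n}),q}_{\mathsf{d}_X}}(\Delta^{\mathfrak{A}}_\mu(x),\Delta^{\mathfrak{A}}_\mu(y))\le N\,k^{\mathfrak{A}}_\mu\,\mathsf{d}_X(x,y),$$ so $\Delta^{\mathfrak{A}}_\mu$ is $N k^{\mathfrak{A}}_\mu$-Lipschitz.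
   Context: $e_{k,(p,q)}\in\mathfrak{A}$ denotes the matrix unit that is $1$ in row $p$, column $q$ of the $k$-th summand and $0$ elsewhere, and $k^{\mathfrak{A}}_\mu=\sum_{k=0}^n\sum_{p,q=1}^{m_k}|\mu(e_{k,(p,q)})|$. $C(X,\mathfrak{A})$: continuous $\mathfrak{A}$-valued functions with supremum norm; $\mathscr{S}(\cdot)$: state space; $C(X,\mathbb{C}1_{\mathfrak{A}})$: $\mathbb{C}1_{\mathfrak{A}}$-valued functions. $l^{(\mathsf{n})}_{\mathsf{d}_X}(a)=\sup_{x\ne y}\|a(x)-a(y)\|_{\mathsf{n}}/\mathsf{d}_X(x,y)$; $\mathsf{L}^{(\mathsf{n}),C(X)}_{\mathsf{d}_X}(a)=\max\{l^{(\mathsf{n})}_{\mathsf{d}_X}(a),\inf_{b\in C(X,\mathbb{C}1_{\mathfrak{A}})}\|a-b\|\}$, $\mathsf{L}^{(\mathsf{n}),\mathbb{C}}_{\mathsf{d}_X}(a)=\max\{l^{(\mathsf{n})}_{\mathsf{d}_X}(a),\inf_{\lambda\in\mathbb{C}}\|a-\lambda1\|\}$, and for a state $\nu$ of $C(X,\mathfrak{A})$, $\mathsf{L}^{(\mathsf{n}),\nu}_{\mathsf{d}_X}(a)=\max\{l^{(\mathsf{n})}_{\mathsf{d}_X}(a),\|a-\nu(a)1\|\}$. $\mathrm{mk}_{\mathsf{L}}(\varphi,\psi)=\sup\{|\varphi(a)-\psi(a)|: a=a^*,\ \mathsf{L}(a)\le1\}$. *)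

From HB Require Import structures.
From mathcomp Require Import all_boot all_order all_algebra.
From mathcomp Require Import all_classical all_reals all_analysis.
From mathcomp.real_closed Require Import complex.
Set Implicit Arguments.
Unset Strict Implicit.
Unset Printing Implicit Defensive.
Import Order.TTheory GRing.Theory Num.Theory.
Local Open Scope classical_set_scope.
Local Open Scope ring_scope.

Definition cmod (R : realType) (z : R[i]) : R := Normc.normc z.

Definition alg (R : realType) (n : nat) (m : 'I_n.+1 -> nat) : Type :=
  forall k : 'I_n.+1, 'M[R[i]]_(m k).

Section AlgOps.
Variables (R : realType) (n : nat) (m : 'I_n.+1 -> nat).
Local Notation A := (alg R m).

Definition alg_add (a b : A) : A := fun k => a k + b k.
Definition alg_opp (a : A) : A := fun k => - a k.
Definition alg_sub (a b : A) : A := alg_add a (alg_opp b).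
Definition alg_zero : A := fun k => 0.
Definition alg_one : A := fun k => 1%:M.
Definition alg_scale (c : R[i]) (a : A) : A := fun k => c *: a k.
Definition alg_mul (a b : A) : A := fun k => a k *m b k.
Definition alg_star (a : A) : A :=
  fun k => \matrix_(i, j) conjc (a k j i).

Definition vnorm (p : nat) (v : 'cV[R[i]]_p) : R :=
  Num.sqrt (\sum_(i < p) cmod (v i 0) ^+ 2).
Definition mxopnorm (p : nat) (M : 'M[R[i]]_p) : R :=
  sup [set vnorm (M *m v) | v in [set v : 'cV[R[i]]_p | vnorm v <= 1]].

Definition alg_norm (a : A) : R := \big[Num.max/0]_(k < n.+1) mxopnorm (a k).

Definition matunit (k : 'I_n.+1) (p q : 'I_(m k)) : A :=
  fun k' => \matrix_(i < m k', j < m k')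
     ((k' == k) && (val i == val p) && (val j == val q))%:R.

Definition is_state_alg (mu : A -> R[i]) : Prop :=
  [/\ forall a b, mu (alg_add a b) = mu a + mu b,
      forall (c : R[i]) a, mu (alg_scale c a) = c * mu a,
      forall a, 0 <= mu (alg_mul (alg_star a) a) &
      mu alg_one = 1].

Definition kA (mu : A -> R[i]) : R :=
  \sum_(k < n.+1) \sum_(p < m k) \sum_(q < m k) cmod (mu (matunit p q)).

Variable X : metricType R.

Definition contA (a : X -> A) : Prop :=
  forall x (e : R), 0 < e -> exists2 d : R, 0 < d &
    forall y, mdist x y < d -> alg_norm (alg_sub (a y) (a x)) < e.

Definition fadd (a b : X -> A) : X -> A := fun x => alg_add (a x) (b x).
Definition fsub (a b : X -> A) : X -> A := fun x => alg_sub (a x) (b x).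
Definition fscale (c : R[i]) (a : X -> A) : X -> A := fun x => alg_scale c (a x).
Definition fmul (a b : X -> A) : X -> A := fun x => alg_mul (a x) (b x).
Definition fstar (a : X -> A) : X -> A := fun x => alg_star (a x).
Definition fone : X -> A := fun _ => alg_one.

Definition supnorm (a : X -> A) : R := sup [set alg_norm (a x) | x in [set: X]].

(** states of C(X, A) (functionals are only constrained on C(X, A)) *)
Definition is_state_CXA (phi : (X -> A) -> R[i]) : Prop :=
  [/\ forall a b, contA a -> contA b -> phi (fadd a b) = phi a + phi b,
      forall (c : R[i]) a, contA a -> phi (fscale c a) = c * phi a,
      forall a, contA a -> 0 <= phi (fmul (fstar a) a) &
      phi fone = 1].

Definition Delta (mu : A -> R[i]) (x : X) : (X -> A) -> R[i] :=
  fun a => mu (a x).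

Definition lipn (nn : A -> R) (a : X -> A) : \bar R :=
  ereal_sup [set e | exists x y : X, x <> y /\
                     e = (nn (alg_sub (a x) (a y)) / mdist x y)%:E].

Inductive qparam : Type :=
| qCX : qparam
| qC : qparam
| qState : ((X -> A) -> R[i]) -> qparam.

Definition qparam_valid (q : qparam) : Prop :=
  match q with qState nu => is_state_CXA nu | _ => True end.

Definition qterm (q : qparam) (a : X -> A) : R :=
  match q with
  | qCX => inf [set supnorm (fsub a b) | b in
                 [set b : X -> A | contA b /\
                    exists lam : X -> R[i], forall x, b x = alg_scale (lam x) alg_one]]
  | qC => inf [set supnorm (fsub a (fun _ => alg_scale lam alg_one)) |
                 lam in [set: R[i]]]
  | qState nu => supnorm (fsub a (fun _ => alg_scale (nu a) alg_one))
  end.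

Definition Lq (nn : A -> R) (q : qparam) (a : X -> A) : \bar R :=
  maxe (lipn nn a) (qterm q a)%:E.

Definition mk (L : (X -> A) -> \bar R) (phi psi : (X -> A) -> R[i]) : \bar R :=
  ereal_sup [set (cmod (phi a - psi a))%:E | a in
               [set a : X -> A | [/\ contA a, fstar a = a & (L a <= 1)%E]]].

End AlgOps.

From HB Require Import structures.
From mathcomp Require Import all_boot all_order all_algebra.
From mathcomp Require Import all_classical all_reals all_analysis.
From mathcomp.real_closed Require Import complex.
From mathcomp Require Import lra.
Set Implicit Arguments.
Unset Strict Implicit.
Unset Printing Implicit Defensive.
Import Order.TTheory GRing.Theory Num.Theory.
Local Open Scope classical_set_scope.
Local Open Scope ring_scope.

(* Expanding an element of A in the matrix units shows that a state mu is
   bounded, |mu a| <= k_mu ||a||, since every entry of a block is dominated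
   by the operator norm of that block.  Hence mu_x - mu_y is controlled by
   ||a x - a y||, which gives both the continuity of Delta_mu and, through the
   Lipschitz seminorm, the Monge-Kantorovich estimate.  Conversely the test
   function z |-> d_X(x, z) 1 is sent by mu_y to d_X(x, y), so a single
   weak* neighbourhood already forces points to be d_X-close. *)

Section ComplexModulus.
Variable R : realType.
Implicit Types z w : R[i].

Lemma cmod_ge0 z : 0 <= cmod z.
Proof. by case: z => a b; rewrite /cmod sqrtr_ge0. Qed.

Lemma cmod0 : @cmod R 0 = 0.
Proof. exact: Normc.normc0. Qed.

Lemma cmodM z w : cmod (z * w) = cmod z * cmod w.
Proof. exact: Normc.normcM. Qed.

Lemma cmod_real (r : R) : @cmod R (r%:C)%C = `|r|.
Proof. by rewrite /cmod /= expr0n /= addr0 sqrtr_sqr. Qed.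

Lemma cmod_sum (I : Type) (r : seq I) (P : pred I) (F : I -> R[i]) :
  cmod (\sum_(i <- r | P i) F i) <= \sum_(i <- r | P i) cmod (F i).
Proof.
elim/big_rec2: _ => [|i y1 y2 _ IH]; first by rewrite cmod0.
by apply: le_trans (le_normcD _ _) _; rewrite lerD2l.
Qed.

End ComplexModulus.

Lemma sum_sqr_le_sqr_sum (R : realDomainType) (I : Type) (r : seq I)
    (P : pred I) (F : I -> R) :
  (forall i, 0 <= F i) ->
  \sum_(i <- r | P i) F i ^+ 2 <= (\sum_(i <- r | P i) F i) ^+ 2.
Proof.
move=> F_ge0.
suff [] : \sum_(i <- r | P i) F i ^+ 2 <= (\sum_(i <- r | P i) F i) ^+ 2
          /\ 0 <= \sum_(i <- r | P i) F i by [].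
elim/big_rec2: _ => [|i s2 s _ [IH s_ge0]]; first by rewrite expr0n /= lexx.
have := F_ge0 i; split; [nra | exact: addr_ge0].
Qed.

Section MatrixNorms.
Variable R : realType.
Implicit Types (p : nat) (c : R[i]).

Lemma vnorm_ge_entry p (v : 'cV[R[i]]_p) i : cmod (v i 0) <= vnorm v.
Proof.
rewrite -(ger0_norm (cmod_ge0 (v i 0))) -sqrtr_sqr; apply: ler_wsqrtr.
by rewrite (bigD1 i) //= lerDl; apply: sumr_ge0 => j _; rewrite sqr_ge0.
Qed.

Lemma vnorm_le_sum p (v : 'cV[R[i]]_p) : vnorm v <= \sum_i cmod (v i 0).
Proof.
have sum_ge0 : 0 <= \sum_i cmod (v i 0) by apply: sumr_ge0 => i _; apply: cmod_ge0.
rewrite -(ger0_norm sum_ge0) -sqrtr_sqr; apply: ler_wsqrtr.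
by apply: sum_sqr_le_sqr_sum => i; apply: cmod_ge0.
Qed.

Lemma vnormZ p c (v : 'cV[R[i]]_p) : vnorm (c *: v) = cmod c * vnorm v.
Proof.
rewrite /vnorm (eq_bigr (fun i => cmod c ^+ 2 * cmod (v i 0) ^+ 2)) => [|i _].
  by rewrite -mulr_sumr sqrtrM ?sqr_ge0 // sqrtr_sqr ger0_norm ?cmod_ge0.
by rewrite mxE cmodM exprMn.
Qed.

Definition mxsum_cmod p (M : 'M[R[i]]_p) : R := \sum_i \sum_j cmod (M i j).

Lemma vnorm_mulmx_le p (M : 'M[R[i]]_p) v :
  vnorm (M *m v) <= mxsum_cmod M * vnorm v.
Proof.
apply: le_trans (vnorm_le_sum _) _; rewrite mulr_suml; apply: ler_sum => i _.
rewrite mxE; apply: le_trans (cmod_sum _ _ _) _.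
rewrite mulr_suml; apply: ler_sum => j _.
by rewrite cmodM ler_wpM2l ?cmod_ge0 ?vnorm_ge_entry.
Qed.

Lemma mxopnorm_has_sup p (M : 'M[R[i]]_p) :
  has_sup [set vnorm (M *m v) | v in [set v : 'cV[R[i]]_p | vnorm v <= 1]].
Proof.
split.
  exists (vnorm (M *m 0)), 0 => //=; apply: le_trans (vnorm_le_sum _) _.
  by rewrite big1 ?ler01 // => i _; rewrite mxE cmod0.
exists (mxsum_cmod M) => _ [v /= v_le1 <-].
apply: le_trans (vnorm_mulmx_le _ _) _; rewrite -[leRHS]mulr1 ler_wpM2l //.
by apply: sumr_ge0 => i _; apply: sumr_ge0 => j _; apply: cmod_ge0.
Qed.

Lemma mxopnorm_ge p (M : 'M[R[i]]_p) v :
  vnorm v <= 1 -> vnorm (M *m v) <= mxopnorm M.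
Proof. by move=> v_le1; apply: sup_ubound; [case: (mxopnorm_has_sup M)|exists v]. Qed.

Lemma entry_le_mxopnorm p (M : 'M[R[i]]_p) i j : cmod (M i j) <= mxopnorm M.
Proof.
have -> : M i j = (M *m @delta_mx _ p 1 j 0) i 0 by rewrite -colE mxE.
apply: le_trans (vnorm_ge_entry _ _) (mxopnorm_ge _ _).
apply: le_trans (vnorm_le_sum _) _.
rewrite (bigD1 j) //= big1 => [|k /negbTE kj]; last by rewrite mxE kj cmod0.
by rewrite addr0 !mxE !eqxx /= expr0n /= addr0 expr1n sqrtr1.
Qed.

Lemma mxopnorm_scale1_le p c : mxopnorm (c *: 1%:M : 'M[R[i]]_p) <= cmod c.
Proof.
apply: sup_le_ub; first by case: (mxopnorm_has_sup (c *: 1%:M : 'M[R[i]]_p)).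
move=> _ [v /= v_le1 <-]; rewrite -scalemxAl mul1mx vnormZ.
by rewrite -[leRHS]mulr1 ler_wpM2l ?cmod_ge0.
Qed.

End MatrixNorms.

Section AlgebraNorm.
Variables (R : realType) (n : nat) (m : 'I_n.+1 -> nat).
Local Notation A := (alg R m).
Local Notation "\asum_ ( i <- r ) F" :=
  (\big[@alg_add R n m/@alg_zero R n m]_(i <- r) F) (at level 41, F at level 41, i, r at level 50).
Local Notation "\asum_ ( i < k ) F" :=
  (\big[@alg_add R n m/@alg_zero R n m]_(i < k) F) (at level 41, F at level 41, i, k at level 50).

Lemma alg_ext (a b : A) : (forall k, a k = b k) -> a = b.
Proof. exact: boolp.functional_extensionality_dep. Qed.

Lemma alg_norm_ge0 (a : A) : 0 <= alg_norm a.
Proof. by rewrite /alg_norm; elim/big_rec: _ => // k x _ x_ge0; rewrite le_max x_ge0 orbT. Qed.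

Lemma mxopnorm_le_alg_norm (a : A) k : mxopnorm (a k) <= alg_norm a.
Proof. by rewrite /alg_norm (bigD1 k) //= le_max lexx. Qed.

Lemma entry_le_alg_norm (a : A) k i j : cmod (a k i j) <= alg_norm a.
Proof. exact: le_trans (entry_le_mxopnorm _ _ _) (mxopnorm_le_alg_norm _ _). Qed.

Lemma alg_norm_scale1_le (c : R[i]) : alg_norm (alg_scale c (@alg_one R n m)) <= cmod c.
Proof.
rewrite /alg_norm; elim/big_rec: _ => [|k x _ x_le]; first exact: cmod_ge0.
by rewrite ge_max x_le mxopnorm_scale1_le.
Qed.

Lemma alg_sum_eval (I : Type) (r : seq I) (F : I -> A) k :
  (\asum_(i <- r) F i) k = \sum_(i <- r) F i k.
Proof. exact: (big_morph (fun b : A => b k)). Qed.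

Lemma matunit_expansion (a : A) :
  a = \asum_(k < n.+1) \asum_(p < m k) \asum_(q < m k)
        alg_scale (a k p q) (@matunit R n m k p q).
Proof.
apply: alg_ext => k'; rewrite alg_sum_eval; apply/matrixP => i j.
rewrite summxE (bigD1 k') //= big1 ?addr0 => [|k /negbTE kk'].
  rewrite alg_sum_eval summxE (bigD1 i) //= big1 ?addr0 => [|p /negbTE pi].
    rewrite alg_sum_eval summxE (bigD1 j) //= big1 ?addr0 => [|q /negbTE qj].
      by rewrite /alg_scale /matunit !mxE !eqxx mulr1.
    by rewrite /alg_scale /matunit !mxE !eqxx (inj_eq val_inj) eq_sym qj mulr0.
  rewrite alg_sum_eval summxE big1 // => q _.
  by rewrite /alg_scale /matunit !mxE eqxx (inj_eq val_inj) eq_sym pi mulr0.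
rewrite alg_sum_eval summxE big1 // => p _; rewrite alg_sum_eval summxE big1 // => q _.
by rewrite /alg_scale /matunit !mxE eq_sym kk' mulr0.
Qed.

End AlgebraNorm.

Section LinearFunctional.
Variables (R : realType) (n : nat) (m : 'I_n.+1 -> nat) (mu : alg R m -> R[i]).
Hypothesis muD : forall a b, mu (alg_add a b) = mu a + mu b.
Hypothesis muZ : forall c a, mu (alg_scale c a) = c * mu a.

Lemma kA_ge0 : 0 <= kA mu.
Proof. by do 3![apply: sumr_ge0 => ? _]; apply: cmod_ge0. Qed.

Lemma linear_alg_sub a b : mu (alg_sub a b) = mu a - mu b.
Proof.
have -> : alg_sub a b = alg_add a (alg_scale (-1) b).
  by apply: alg_ext => k; rewrite /alg_sub /alg_add /alg_opp /alg_scale scaleN1r.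
by rewrite muD muZ mulN1r.
Qed.

Lemma linear_alg_sum (I : Type) (r : seq I) (F : I -> alg R m) :
  mu (\big[@alg_add R n m/@alg_zero R n m]_(i <- r) F i) = \sum_(i <- r) mu (F i).
Proof.
apply: (big_morph mu muD).
have -> : @alg_zero R n m = alg_scale 0 (@alg_zero R n m).
  by apply: alg_ext => k; rewrite /alg_scale scale0r.
by rewrite muZ mul0r.
Qed.

Lemma linear_alg_bounded a : cmod (mu a) <= kA mu * alg_norm a.
Proof.
rewrite {1}(matunit_expansion a) /kA !linear_alg_sum mulr_suml.
apply: le_trans (cmod_sum _ _ _) _; apply: ler_sum => k _.
rewrite linear_alg_sum mulr_suml; apply: le_trans (cmod_sum _ _ _) _.
apply: ler_sum => p _; rewrite linear_alg_sum mulr_suml.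
apply: le_trans (cmod_sum _ _ _) _; apply: ler_sum => q _.
by rewrite muZ cmodM mulrC ler_wpM2l ?cmod_ge0 ?entry_le_alg_norm.
Qed.

End LinearFunctional.

Lemma mdist_common_radius (R : realType) (X : metricType R) (x : X) (I : finType)
    (P : I -> X -> Prop) :
  (forall i, exists2 d : R, 0 < d & forall y, mdist x y < d -> P i y) ->
  exists2 d : R, 0 < d & forall y, mdist x y < d -> forall i, P i y.
Proof.
move=> near_x; have : \forall y \near x, forall i, P i y.
  apply: filter_forall => i; have [d d_gt0 Pi] := near_x i.
  by apply/nbhs_ballP; exists d => // y; rewrite ballEmdist; apply: Pi.
by case/nbhs_ballP => d d_gt0 P_ball; exists d => // y xy_lt; apply: P_ball; rewrite ballEmdist.
Qed.

Section Delta.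
Variables (R : realType) (X : metricType R) (n : nat) (m : 'I_n.+1 -> nat).
Variable mu : alg R m -> R[i].
Hypothesis hmu : is_state_alg mu.

Let muD : forall a b, mu (alg_add a b) = mu a + mu b. Proof. by case: hmu. Qed.
Let muZ : forall c a, mu (alg_scale c a) = c * mu a. Proof. by case: hmu. Qed.

Lemma Delta_is_state (x : X) : is_state_CXA (Delta mu x).
Proof. by case: hmu => ? ? mu_ge0 ?; split=> // *; rewrite /Delta ?muD ?muZ ?mu_ge0. Qed.

Lemma Delta_sub_le (a : X -> alg R m) x y :
  cmod (Delta mu y a - Delta mu x a) <= kA mu * alg_norm (alg_sub (a y) (a x)).
Proof. by rewrite /Delta -(linear_alg_sub muD muZ) linear_alg_bounded. Qed.

Lemma Delta_continuous (a : X -> alg R m) x e : contA a -> 0 < e ->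
  exists2 d : R, 0 < d & forall y, mdist x y < d ->
    cmod (Delta mu y a - Delta mu x a) < e.
Proof.
move=> a_cont e_gt0; have k_ge0 := kA_ge0 mu.
have [|d d_gt0 a_near] := a_cont x (e / (kA mu + 1)); first by rewrite divr_gt0 ?ltr_wpDl.
exists d => // y /a_near; rewrite ltr_pdivlMr ?ltr_wpDl // => a_lt.
apply: le_lt_trans (Delta_sub_le _ _ _) _.
have := alg_norm_ge0 (alg_sub (a y) (a x)); nra.
Qed.

Definition dist_fun (x : X) : X -> alg R m :=
  fun z => alg_scale ((mdist x z)%:C)%C (@alg_one R n m).

Lemma dist_fun_cont x : contA (dist_fun x).
Proof.
move=> z e e_gt0; exists e => // y zy_lt.
have -> : alg_sub (dist_fun x y) (dist_fun x z)
    = alg_scale ((mdist x y - mdist x z)%:C)%C (@alg_one R n m).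
  by apply: alg_ext => k; rewrite /alg_sub /alg_add /alg_opp /alg_scale rmorphB scalerBl.
apply: le_lt_trans (alg_norm_scale1_le _ _) _; rewrite cmod_real.
apply: le_lt_trans zy_lt; rewrite ler_norml.
have := metric_triangle x z y; have := metric_triangle x y z; have := metric_sym z y.
by move=> *; apply/andP; split; lra.
Qed.

Lemma Delta_dist_fun x y : Delta mu y (dist_fun x) = ((mdist x y)%:C)%C.
Proof. by case: hmu => _ _ _ mu1; rewrite /Delta muZ mu1 mulr1. Qed.

Lemma mk_Delta_le (nn : alg R m -> R) (N : R) (L : (X -> alg R m) -> \bar R)
    (x y : X) :
  0 < N -> (forall a, alg_norm a <= N * nn a) ->
  (forall a, (L a <= 1)%E -> (lipn nn a <= 1)%E) ->
  (mk L (Delta mu x) (Delta mu y) <= (N * kA mu * mdist x y)%:E)%E.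
Proof.
move=> N_gt0 norm_le L_lip; have k_ge0 := kA_ge0 mu.
apply: ge_ereal_sup => _ [a [_ _ /L_lip lip_le1] <-]; rewrite lee_fin.
have [<-|xy] := eqVneq x y; first by rewrite subrr cmod0 mdistxx mulr0.
have nn_le : nn (alg_sub (a x) (a y)) <= mdist x y.
  rewrite -[leRHS]mul1r -ler_pdivrMr ?mdist_gt0 // -lee_fin; apply: le_trans lip_le1.
  by apply: ereal_sup_ubound; exists x, y; split => //; apply/eqP.
apply: le_trans (Delta_sub_le a y x) _.
rewrite [N * _]mulrC -mulrA; apply: ler_wpM2l => //.
by apply: le_trans (norm_le _) _; rewrite ler_pM2l.
Qed.

End Delta.

Theorem proposition3p6 (R : realType) (X : metricType R)
  (hX : compact [set: X])
  (n : nat) (m : 'I_n.+1 -> nat) (hm : forall k, (0 < m k)%N)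
  (mu : alg R m -> R[i]) (hmu : is_state_alg mu) :
  (* Delta_mu maps X into the state space of C(X, A) *)
  (forall x : X, is_state_CXA (Delta mu x))
  (* Delta_mu is injective (states are compared on C(X, A)) *)
  /\ (forall x y : X,
        (forall a, contA a -> Delta mu x a = Delta mu y a) -> x = y)
  (* Delta_mu is continuous from (X, d_X) to the weak* topology:
     preimages of basic weak* neighbourhoods are neighbourhoods *)
  /\ (forall (x : X) (p : nat) (f : 'I_p -> (X -> alg R m)) (e : R),
        (forall i, contA (f i)) -> 0 < e ->
        exists2 d : R, 0 < d & forall y : X, mdist x y < d ->
          forall i, cmod (Delta mu y (f i) - Delta mu x (f i)) < e)
  (* the inverse of Delta_mu is continuous on the image of Delta_mu
     (with the relative weak* topology) *)
  /\ (forall (x : X) (e : R), 0 < e ->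
        exists (p : nat) (f : 'I_p -> (X -> alg R m)),
          (forall i, contA (f i)) /\
          exists2 d : R, 0 < d & forall y : X,
            (forall i, cmod (Delta mu y (f i) - Delta mu x (f i)) < d) ->
            mdist x y < e)
  (* Lipschitz estimate for the Monge-Kantorovich metrics *)
  /\ (forall (nn : alg R m -> R) (M N : R),
        (forall a b, nn (alg_add a b) <= nn a + nn b) ->
        (forall (r : R) a, nn (alg_scale (r%:C)%C a) = `|r| * nn a) ->
        (forall a, nn a = 0 -> a = @alg_zero R n m) ->
        0 < M -> 0 < N ->
        (forall a, M * nn a <= alg_norm a /\ alg_norm a <= N * nn a) ->
        forall q : @qparam R n m X, qparam_valid q ->
        forall x y : X,
          (mk (Lq nn q) (Delta mu x) (Delta mu y)
             <= (N * kA mu * mdist x y)%:E)%E).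
Proof.
split; first exact: Delta_is_state.
split.
  move=> x y /(_ _ (dist_fun_cont m x)); rewrite !Delta_dist_fun // mdistxx.
  by move/complexI/esym/mdist_positivity.
split.
  move=> x p f e f_cont e_gt0; apply: mdist_common_radius => i.
  exact: Delta_continuous.
split.
  move=> x e e_gt0; exists 1%N, (fun _ => dist_fun m x).
  split=> [_|]; first exact: dist_fun_cont.
  exists e => // y /(_ ord0); rewrite !Delta_dist_fun // mdistxx subr0.
  by rewrite cmod_real ger0_norm ?mdist_ge0.
move=> nn M N _ _ _ _ N_gt0 norm_le q _ x y.
apply: (mk_Delta_le hmu (nn := nn)) => // a; first by case: (norm_le a).
by rewrite /Lq ge_max => /andP[].
Qed.
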